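(* For every program $p$, environment $\sigma$ and time instant $t$: (1) if $(p,\sigma,t)\to(p',\sigma',t')$ and $(p',\sigma',t')\Downarrow(\mathit{skip},\sigma'')$ then $(p,\sigma,t)\Downarrow(\mathit{skip},\sigma'')$; (2) if $(p,\sigma,t)\to(p',\sigma',t')$ and $(p',\sigma',t')\Downarrow(\mathit{stop},\sigma'')$ then $(p,\sigma,t)\Downarrow(\mathit{stop},\sigma'')$.
   Context: Syntax. Fix variables $\mathcal{X}=\{x_1,\dots,x_n\}$. Linear terms $u::= r\mid r\cdot x\mid u_1+u_2$. Atomic programs $x:=u$ and $\bar x'=\bar u\ \mathtt{for}\ u$. Programs $p::= a\mid p;q\mid \mathtt{if}\ b\ \mathtt{then}\ p\ \mathtt{else}\ q\mid \mathtt{while}\ b\ \mathtt{do}\ p$, $b$ in the free Boolean algebra on atoms $u_1\le u_2$, $u_1\ge u_2$. Environments $\sigma\colon\mathcal{X}\to\mathbb{R}$; $u\sigma,b\sigma$ evaluation; $\sigma\triangledown[\bar v/\bar x]$ update; $\phi_\sigma$ solution of $\bar x'=\bar u$ with initial value $(\sigma(x_i))_i$. Time instants are in $\mathbb{R}_{\ge0}$. Small-step rules: $(x:=u,\sigma,t)\to(\mathit{skip},\sigma\triangledown[u\sigma/x],t)$; $(\bar x'=\bar u\ \mathtt{for}\ u,\sigma,t)\to(\mathit{stop},\sigma\triangledown[\phi_\sigma(t)/\bar x],0)$ if $t<u\sigma$; $\to(\mathit{skip},\sigma\triangledown[\phi_\sigma(u\sigma)/\bar x],t-u\sigma)$ if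 $t\ge u\sigma$; $(\mathtt{if}\ b\ \mathtt{then}\ p\ \mathtt{else}\ q,\sigma,t)\to(p,\sigma,t)$ if $b\sigma=\top$, $\to(q,\sigma,t)$ if $b\sigma=\bot$; $(\mathtt{while}\ b\ \mathtt{do}\ p,\sigma,t)\to(p;\mathtt{while}\ b\ \mathtt{do}\ p,\sigma,t)$ if $b\sigma=\top$, $\to(\mathit{skip},\sigma,t)$ if $b\sigma=\bot$; from $(p,\sigma,t)\to(\mathit{stop},\sigma',t')$ infer $(p;q,\sigma,t)\to(\mathit{stop},\sigma',t')$; from $(p,\sigma,t)\to(\mathit{skip},\sigma',t')$ infer $(p;q,\sigma,t)\to(q,\sigma',t')$; from $(p,\sigma,t)\to(p',\sigma',t')$ with $p'\notin\{\mathit{skip},\mathit{stop}\}$ infer $(p;q,\sigma,t)\to(p';q,\sigma',t')$. Big-step relation $\Downarrow$ (least relation closed under): if $t<u\sigma$ then $(\bar x'=\bar u\ \mathtt{for}\ u,\sigma,t)\Downarrow(\mathit{stop},\sigma\triangledown[\phi_\sigma(t)/\bar x])$; $(\bar x'=\bar u\ \mathtt{for}\ u,\sigma,u\sigma)\Downarrow(\mathit{skip},\sigma\triangledown[\phi_\sigma(u\sigma)/\bar x])$; $(x:=u,\sigma,0)\Downarrow(\mathit{skip},\sigma\triangledown[u\sigma/x])$; from $(p,\sigma,t)\Downarrow(\mathit{stop},\sigma')$ infer $(p;q,\sigma,t)\Downarrow(\mathit{stop},\sigma')$; from $(p,\sigma,t)\Downarrow(\mathit{skip},\sigma')$ and $(q,\sigma',t')\Downarrow(r,\sigma'')$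 infer $(p;q,\sigma,t+t')\Downarrow(r,\sigma'')$; if $b\sigma=\top$ and $(p,\sigma,t)\Downarrow(r,\sigma')$ then $(\mathtt{if}\ b\ \mathtt{then}\ p\ \mathtt{else}\ q,\sigma,t)\Downarrow(r,\sigma')$; if $b\sigma=\bot$ and $(q,\sigma,t)\Downarrow(r,\sigma')$ then the same conclusion; if $b\sigma=\top$ and $(p;\mathtt{while}\ b\ \mathtt{do}\ p,\sigma,t)\Downarrow(r,\sigma')$ then $(\mathtt{while}\ b\ \mathtt{do}\ p,\sigma,t)\Downarrow(r,\sigma')$; if $b\sigma=\bot$ then $(\mathtt{while}\ b\ \mathtt{do}\ p,\sigma,0)\Downarrow(\mathit{skip},\sigma)$. Here $r\in\{\mathit{skip},\mathit{stop}\}$. *)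

From Stdlib Require Import Reals List Bool ClassicalEpsilon.
From Stdlib Require Fin.
Set Implicit Arguments.
Import ListNotations.
Open Scope R_scope.

Section Lang.
Variable n : nat.
Definition var := Fin.t n.
Definition env := var -> R.

Inductive term : Type :=
| TConst : R -> term
| TMul : R -> var -> term
| TPlus : term -> term -> term.

Fixpoint teval (u : term) (s : env) : R :=
  match u with
  | TConst r => r
  | TMul r x => r * s x
  | TPlus u1 u2 => teval u1 s + teval u2 s
  end.

Inductive bexp : Type :=
| BTrue : bexp
| BFalse : bexp
| BLe : term -> term -> bexp
| BGe : term -> term -> bexp
| BNot : bexp -> bexp
| BAnd : bexp -> bexp -> bexp
| BOr : bexp -> bexp -> bexp.

Fixpoint beval (b : bexp) (s : env) : bool :=
  match b with
  | BTrue => true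
  | BFalse => false
  | BLe u1 u2 => if Rle_dec (teval u1 s) (teval u2 s) then true else false
  | BGe u1 u2 => if Rle_dec (teval u2 s) (teval u1 s) then true else false
  | BNot b => negb (beval b s)
  | BAnd b1 b2 => beval b1 s && beval b2 s
  | BOr b1 b2 => beval b1 s || beval b2 s
  end.

(* programs; an ODE  x_1' = u_1, ..., x_k' = u_k for u  is given by the
   list of pairs (x_i, u_i) and the duration term u *)
Inductive prog : Type :=
| PAsg : var -> term -> prog
| PODE : list (var * term) -> term -> prog
| PSeq : prog -> prog -> prog
| PIf : bexp -> prog -> prog -> prog
| PWhile : bexp -> prog -> prog.

Inductive res : Type :=
| RProg : prog -> res
| RSkip : res
| RStop : res.

Inductive term_mark : Type := Skip | Stop.

Definition upd1 (s : env) (x : var) (v : R) : env :=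
  fun y => if Fin.eq_dec y x then v else s y.

Fixpoint lookup (xs : list (var * term)) (y : var) : option term :=
  match xs with
  | [] => None
  | (x, u) :: xs' => if Fin.eq_dec y x then Some u else lookup xs' y
  end.

Definition is_sol (xs : list (var * term)) (s : env) (f : R -> env) : Prop :=
  f 0 = s /\
  (forall y, lookup xs y = None -> forall r, f r y = s y) /\
  (forall y u, lookup xs y = Some u ->
     forall r, derivable_pt_lim (fun r' => f r' y) r (teval u (f r))).

(* phi_s : the solution (chosen by classical choice; it exists and is unique
   for well-formed linear systems) *)
Definition phi (xs : list (var * term)) (s : env) : R -> env :=
  epsilon (inhabits (fun _ _ => 0)) (is_sol xs s).

Definition upd_flow (xs : list (var * term)) (s : env) (t : R) : env :=
  fun y => match lookup xs y with
           | Some _ => phi xs s t y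
           | None => s y
           end.

Inductive step : prog -> env -> R -> res -> env -> R -> Prop :=
| st_asg : forall x u s t,
    step (PAsg x u) s t RSkip (upd1 s x (teval u s)) t
| st_ode_stop : forall xs u s t,
    t < teval u s ->
    step (PODE xs u) s t RStop (upd_flow xs s t) 0
| st_ode_skip : forall xs u s t,
    t >= teval u s ->
    step (PODE xs u) s t RSkip (upd_flow xs s (teval u s)) (t - teval u s)
| st_if_t : forall b p q s t,
    beval b s = true -> step (PIf b p q) s t (RProg p) s t
| st_if_f : forall b p q s t,
    beval b s = false -> step (PIf b p q) s t (RProg q) s t
| st_while_t : forall b p s t,
    beval b s = true -> step (PWhile b p) s t (RProg (PSeq p (PWhile b p))) s t
| st_while_f : forall b p s t,
    beval b s = false -> step (PWhile b p) s t RSkip s t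
| st_seq_stop : forall p q s t s' t',
    step p s t RStop s' t' -> step (PSeq p q) s t RStop s' t'
| st_seq_skip : forall p q s t s' t',
    step p s t RSkip s' t' -> step (PSeq p q) s t (RProg q) s' t'
| st_seq_prog : forall p p' q s t s' t',
    step p s t (RProg p') s' t' -> step (PSeq p q) s t (RProg (PSeq p' q)) s' t'.

Inductive bigstep : prog -> env -> R -> term_mark -> env -> Prop :=
| bs_ode_stop : forall xs u s t,
    t < teval u s -> bigstep (PODE xs u) s t Stop (upd_flow xs s t)
| bs_ode_skip : forall xs u s,
    bigstep (PODE xs u) s (teval u s) Skip (upd_flow xs s (teval u s))
| bs_asg : forall x u s,
    bigstep (PAsg x u) s 0 Skip (upd1 s x (teval u s))
| bs_seq_stop : forall p q s t s',
    bigstep p s t Stop s' -> bigstep (PSeq p q) s t Stop s'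
| bs_seq_skip : forall p q s t t' s' r s'',
    bigstep p s t Skip s' -> bigstep q s' t' r s'' ->
    bigstep (PSeq p q) s (t + t') r s''
| bs_if_t : forall b p q s t r s',
    beval b s = true -> bigstep p s t r s' -> bigstep (PIf b p q) s t r s'
| bs_if_f : forall b p q s t r s',
    beval b s = false -> bigstep q s t r s' -> bigstep (PIf b p q) s t r s'
| bs_while_t : forall b p s t r s',
    beval b s = true -> bigstep (PSeq p (PWhile b p)) s t r s' ->
    bigstep (PWhile b p) s t r s'
| bs_while_f : forall b p s,
    beval b s = false -> bigstep (PWhile b p) s 0 Skip s.

End Lang.

From Stdlib Require Import Reals.
Open Scope R_scope.

(* A small step (p, s, t) -> (_, s', t') consumes exactly t - t' time units.
   Hence a big-step run of the successor that takes t2 units extends, by one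
   more rule application, to a run of p taking t - t' + t2 units; induction on
   the small step does it, the only interesting case being p; q. The theorem
   is the instance t2 = t'. *)

Section Lang.

Context {n : nat}.

Lemma step_skip_bigstep (p : prog n) (s s' : env n) (t t' : R) :
  step p s t (RSkip n) s' t' -> bigstep p s (t - t') Skip s'.
Proof.
  intro Hstep; remember (RSkip n) as r eqn:Hr.
  induction Hstep; try discriminate.
  - replace (t - t) with 0 by ring; constructor.
  - replace (t - (t - teval u s)) with (teval u s) by ring; constructor.
  - replace (t - t) with 0 by ring; now constructor.
Qed.

Lemma step_prog_bigstep (p p' : prog n) (s s' s'' : env n) (t t' t2 : R)
    (r : term_mark) :
  step p s t (RProg p') s' t' -> bigstep p' s' t2 r s'' ->
  bigstep p s (t - t' + t2) r s''.
Proof.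
  intro Hstep; remember (RProg p') as rp eqn:Hrp.
  revert p' t2 r s'' Hrp.
  induction Hstep; intros p0 t2 r s'' Hrp Hbig; inversion Hrp; subst.
  - replace (t - t + t2) with t2 by ring; now apply bs_if_t.
  - replace (t - t + t2) with t2 by ring; now apply bs_if_f.
  - replace (t - t + t2) with t2 by ring; now apply bs_while_t.
  - apply bs_seq_skip with (s' := s'); [now apply step_skip_bigstep | exact Hbig].
  - inversion Hbig; subst.
    + apply bs_seq_stop; eapply IHHstep; eauto.
    + replace (t - t' + (t0 + t'0)) with (t - t' + t0 + t'0) by ring.
      eapply bs_seq_skip; [eapply IHHstep; eauto | eauto].
Qed.

End Lang.

Theorem lemma3 (n : nat) (p p' : prog n) (s s' s'' : env n) (t t' : R) :
  0 <= t ->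
  (step p s t (RProg p') s' t' -> bigstep p' s' t' Skip s'' -> bigstep p s t Skip s'') /\
  (step p s t (RProg p') s' t' -> bigstep p' s' t' Stop s'' -> bigstep p s t Stop s'').
Proof.
  intros _; split; intros Hstep Hbig;
    replace t with (t - t' + t') by ring;
    eapply step_prog_bigstep; eassumption.
Qed.
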